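(* In the construction described in the context, $H_i\subseteq H_{i+1}$ for every $i=0,\dots,\ell-1$.
   Context: **Setting.** Let $G=(V,E)$ be an undirected graph (parallel edges allowed, no self-loops) with $n$ vertices and $m$ edges $E=\{e_1,\dots,e_m\}$. Fix integers $c\ge1$, $\delta>c$, $\ell\ge1$ and a real $p\in(0,1)$, and let $s=\lceil pm\rceil$. For graphs on the same vertex set, $\cup$ and $\cap$ act on edge sets, and $\subseteq$ means subgraph. For $C\subseteq V$ and a graph $F$ on $V$, $\partial_F(C)$ is the set of edges of $F$ with exactly one endpoint in $C$. A graph is $c$-edge-connected if it has no cut of size $<c$, and $c$-edge-connected components are maximal induced $c$-edge-connected subgraphs. **Sampling.** For $i=1,\dots,\ell$, let $r_i:\{1,\dots,s\}\to\{1,\dots,m\}$ be a pairwise independent random function: each value is uniform and any two values are independent. The functions $r_1,\dots,r_\ell$ are mutually independent. Set $H_0^0=(V,\emptyset)$ and $H_i^0=H_{i-1}^0\cup(V,\{e_{r_i(1)},\dots,e_{r_i(s)}\})$. **Levels.** Set $G_{-1}=G$. For $i=0,\dots,\ell$, define $H_i$ and $G_i$ as follows. - $H_i$ is the subgraph of $H_i^0\cap G_{i-1}$ consisting of the edges lying inside its $c$-edge-connected components. Equivalently, it is obtained by repeatedly removing all edges lying in cuts of size $<c$. - Start with $G_i:=G_{i-1}$. While some connected component $C$ of $H_i$ satisfies $0<|\partial_{G_i}(C)|<\delta$, delete the edges of $\partial_{G_i}(C)$ from $G_i$ and from $H_i$. *)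

From mathcomp Require Import all_boot all_order all_algebra.
From mathcomp Require Import reals.
Set Implicit Arguments. Unset Strict Implicit. Unset Printing Implicit Defensive.
Import Order.TTheory GRing.Theory Num.Theory.

Section Construction.
(* Multigraph G = (V, E): V = 'I_n, E = {e_1..e_m} indexed by 'I_m,
   edge e has (unordered) endpoints (ends e).1, (ends e).2.
   Graphs on V are represented by their edge sets {set 'I_m}. *)
Variables (n m : nat) (ends : 'I_m -> 'I_n * 'I_n).

Definition in_set_both (S : {set 'I_n}) (e : 'I_m) : bool :=
  ((ends e).1 \in S) && ((ends e).2 \in S).

Definition crosses (C : {set 'I_n}) (e : 'I_m) : bool :=
  ((ends e).1 \in C) != ((ends e).2 \in C).

Definition bdry (F : {set 'I_m}) (C : {set 'I_n}) : {set 'I_m} :=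
  [set e in F | crosses C e].

(* the subgraph of (V,F) induced by S is c-edge-connected:
   no cut (X, S\X) with X nonempty proper has fewer than c edges *)
Definition cec (c : nat) (F : {set 'I_m}) (S : {set 'I_n}) : bool :=
  [forall X : {set 'I_n},
     ((X \subset S) && (X != set0) && (X != S)) ==>
     (c <= #|[set e in F | in_set_both S e && crosses X e]|)].

(* edges of F lying inside the c-edge-connected components
   (maximal vertex sets inducing c-edge-connected subgraphs) of (V,F) *)
Definition cec_core (c : nat) (F : {set 'I_m}) : {set 'I_m} :=
  [set e in F | [exists S : {set 'I_n}, maxset (cec c F) S && in_set_both S e]].

Definition adj (F : {set 'I_m}) : rel 'I_n :=
  fun x y => [exists e in F, (ends e == (x, y)) || (ends e == (y, x))].

Definition is_comp (F : {set 'I_m}) (C : {set 'I_n}) : Prop :=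
  exists x : 'I_n, C = [set y | connect (adj F) x y].

Definition loop_cond (delta : nat) (Gc Hc : {set 'I_m}) (C : {set 'I_n}) : Prop :=
  is_comp Hc C /\ 0 < #|bdry Gc C| /\ #|bdry Gc C| < delta.

Inductive loop_run (delta : nat) :
    {set 'I_m} -> {set 'I_m} -> {set 'I_m} -> {set 'I_m} -> Prop :=
  | loop_stop Gc Hc :
      (forall C, ~ loop_cond delta Gc Hc C) -> loop_run delta Gc Hc Gc Hc
  | loop_step Gc Hc C G' H' :
      loop_cond delta Gc Hc C ->
      loop_run delta (Gc :\: bdry Gc C) (Hc :\: bdry Gc C) G' H' ->
      loop_run delta Gc Hc G' H'.

End Construction.

Definition sample_size (R : realType) (p : R) (m : nat) : nat :=
  `|Num.ceil (p * m%:R)|%N.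

(* H_i^0 = union over j = 1..i of the sampled edges e_{r_j(1..s)};
   H_0^0 is empty. *)
Definition H0 (m s : nat) (r : nat -> 'I_s -> 'I_m) (i : nat) : {set 'I_m} :=
  \bigcup_(1 <= j < i.+1) [set r j k | k : 'I_s].

(* G_{i-1}, with G_{-1} = G (all edges) *)
Definition Gprev (m : nat) (Gs : nat -> {set 'I_m}) (i : nat) : {set 'I_m} :=
  if i is i'.+1 then Gs i' else setT.

From mathcomp Require Import all_boot all_order all_algebra.
From mathcomp Require Import reals.
Import Order.TTheory GRing.Theory Num.Theory.

Set Implicit Arguments.
Unset Strict Implicit.
Unset Printing Implicit Defensive.

(* The while loop only deletes cuts of connected components of H, and no edge
   of H crosses such a cut; so it never touches H, and H_i is the c-core of
   H_i^0 ∩ G_{i-1} and lies in G_i.  Hence the core at level i is contained in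
   H_{i+1}^0 ∩ G_i.  Finally, if the core of F is contained in F', then every
   c-edge-connected component of F is still c-edge-connected in F' (all its
   internal edges belong to the core), so it lies in a component of F'. *)

Section EdgeConnectedCore.

Variables (n m : nat) (ends : 'I_m -> 'I_n * 'I_n).

Lemma cec_core_sub c (F : {set 'I_m}) : cec_core ends c F \subset F.
Proof. by apply/subsetP=> e; rewrite inE => /andP[]. Qed.

Lemma cec_sub c (F F' : {set 'I_m}) S :
  {in F, forall e, in_set_both ends S e -> e \in F'} ->
  cec ends c F S -> cec ends c F' S.
Proof.
move=> FF' /forallP cecF; apply/forallP=> X; apply/implyP=> X_cut.
apply: leq_trans (implyP (cecF X) X_cut) (subset_leq_card _).
apply/subsetP=> e; rewrite !inE => /and3P[eF eS eX].
by rewrite FF' ?eS ?eX.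
Qed.

Lemma cec_core_inside c (F : {set 'I_m}) S e :
  maxset (cec ends c F) S -> e \in F -> in_set_both ends S e ->
  e \in cec_core ends c F.
Proof. by move=> maxS eF eS; rewrite inE eF; apply/existsP; exists S; rewrite maxS. Qed.

Lemma sub_cec_core c (F F' : {set 'I_m}) :
  cec_core ends c F \subset F' -> cec_core ends c F \subset cec_core ends c F'.
Proof.
move=> coreF'; apply/subsetP=> e e_core.
move: (e_core); rewrite inE => /andP[eF /existsP[S /andP[maxS eS]]].
have cecF'S : cec ends c F' S.
  apply: cec_sub (maxsetp maxS) => f fF fS.
  exact: (subsetP coreF' f (cec_core_inside maxS fF fS)).
have [S' maxS' sSS'] := maxset_exists cecF'S.
rewrite inE (subsetP coreF' e e_core) /=; apply/existsP; exists S'.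
by rewrite maxS'; case/andP: eS => e1 e2; rewrite /in_set_both !(subsetP sSS').
Qed.

Lemma comp_no_cross (H : {set 'I_m}) C e :
  is_comp ends H C -> e \in H -> ~~ crosses ends C e.
Proof.
move=> [x ->] eH; rewrite /crosses !inE negbK.
have adj12 : adj ends H (ends e).1 (ends e).2.
  by apply/existsP; exists e; rewrite eH -surjective_pairing eqxx.
have adj21 : adj ends H (ends e).2 (ends e).1.
  by apply/existsP; exists e; rewrite eH -surjective_pairing eqxx orbT.
by apply/eqP; apply/idP/idP => /connect_trans; apply; exact: connect1.
Qed.

Lemma comp_bdry_disjoint (G H : {set 'I_m}) C :
  is_comp ends H C -> [disjoint H & bdry ends G C].
Proof.
move=> compC; rewrite -setI_eq0; apply/eqP/setP=> e; rewrite !inE.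
by case eH: (e \in H); rewrite //= (negbTE (comp_no_cross compC eH)) andbF.
Qed.

Lemma loop_run_keeps_H delta G H G' H' :
  loop_run ends delta G H G' H' -> H \subset G -> H' = H /\ H \subset G'.
Proof.
elim=> {G H G' H'} [//|G H C G' H' [compC _] _ IH] sHG.
have disjHC := comp_bdry_disjoint G compC.
rewrite (setDidPl disjHC) in IH; apply: IH.
by rewrite subsetD sHG.
Qed.

End EdgeConnectedCore.

Lemma H0_subS m s (r : nat -> 'I_s -> 'I_m) i : H0 r i \subset H0 r i.+1.
Proof. by rewrite /H0 [in X in _ \subset X]big_nat_recr //= subsetUl. Qed.

Theorem lemma3 (R : realType) (n m : nat) (ends : 'I_m -> 'I_n * 'I_n)
  (no_loops : forall e, (ends e).1 != (ends e).2)
  (c delta l : nat) (p : R)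
  (hc : (1 <= c)%N) (hcd : (c < delta)%N) (hl : (1 <= l)%N)
  (hp0 : (0 < p)%R) (hp1 : (p < 1)%R)
  (r : nat -> 'I_(sample_size p m) -> 'I_m)
  (Gs Hs : nat -> {set 'I_m})
  (levels : forall i, (i <= l)%N ->
     loop_run ends delta (Gprev Gs i)
       (cec_core ends c (H0 r i :&: Gprev Gs i)) (Gs i) (Hs i)) :
  forall i, (i < l)%N -> Hs i \subset Hs i.+1.
Proof.
move=> i il.
have core_in_level j (jl : (j <= l)%N) :=
  loop_run_keeps_H (levels j jl)
    (subset_trans (cec_core_sub _ _ _) (subsetIr _ _)).
have [-> core_Gi] := core_in_level i (ltnW il).
have [-> _] := core_in_level i.+1 il.
apply: sub_cec_core; rewrite subsetI core_Gi andbT.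
apply: subset_trans (H0_subS r i).
exact: subset_trans (cec_core_sub _ _ _) (subsetIl _ _).
Qed.
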